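(* Let $\mathcal{M}=\{(x,y,z):x^2+y^2=1\}$ be the cylinder in $\mathbb{R}^3$ and let $G\to G'$ be a vertex-to-$K_4$ move. If $G$ is generically infinitesimally rigid on $\mathcal{M}$, then $G'$ is generically infinitesimally rigid on $\mathcal{M}$ (that is, the vertex-to-$K_4$ move on the cylinder preserves generic infinitesimal rigidity).
   Context: Vertex-to-$K_4$ move: replace a vertex $v$ of a simple graph by a copy of $K_4$ on four new vertices, each edge $xv$ being replaced by $xw$ for some arbitrarily chosen vertex $w$ of the $K_4$. For a framework $(G,p)$ on $\mathcal{M}$ ($p=(p_1,\dots,p_n)\in\mathcal{M}^n$), the rigidity matrix $R_{\mathcal{M}}(G,p)$ is the $(|E|+|V|)\times 3|V|$ matrix whose row for edge $v_iv_j$ has $p_i-p_j$ in the column triple of $v_i$ and $p_j-p_i$ in that of $v_j$, and whose row for vertex $v_i$ has the normal $N(p_i)=(2x_i,2y_i,0)$ in the triple of $v_i$; its kernel is the space of infinitesimal flexes. Rigid motion flexes are those induced by infinitesimal isometries of $\mathbb{R}^3$ tangential to $\mathcal{M}$ everywhere; $(G,p)$ is infinitesimally rigid if every infinitesimal flex is a rigid motion flex. $(G,p)$ is generic if any rational-coefficient polynomial in the coordinates vanishing at $p$ lies in the ideal generated by $X_i^2+Y_i^2-1$. A graph is generically infinitesimally rigid on $\mathcal{M}$ if its generic frameworks on $\mathcal{M}$ are infinitesimally rigid. *)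

From HB Require Import structures.
From mathcomp Require Import all_boot all_order all_algebra.
From mathcomp Require Import reals.
From mathcomp Require Import mpoly.

Set Implicit Arguments.
Unset Strict Implicit.
Unset Printing Implicit Defensive.

Import Order.TTheory GRing.Theory Num.Theory.
Local Open Scope ring_scope.

(* Points of R^3 are row vectors 'rV[R]_3; coordinates 0,1,2 are x,y,z. *)

Section Rigidity.
Variable R : realType.

Definition dot3 (a b : 'rV[R]_3) : R := \sum_(c < 3) a 0 c * b 0 c.

Definition on_cyl (a : 'rV[R]_3) : Prop := a 0 0 ^+ 2 + a 0 1 ^+ 2 = 1.

Definition cyl_normal (a : 'rV[R]_3) : 'rV[R]_3 :=
  \row_(c < 3) (if c == 0 then 2 * a 0 0 else if c == 1 then 2 * a 0 1 else 0).

Variable V : finType.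

(* u is in the kernel of the rigidity matrix R_M(G,p): the row of edge v_iv_j
   applied to u is (p_i - p_j).u_i + (p_j - p_i).u_j, and the row of vertex v_i
   applied to u is N(p_i).u_i. *)
Definition inf_flex (e : rel V) (p u : V -> 'rV[R]_3) : Prop :=
  (forall i j, e i j -> dot3 (p i - p j) (u i) + dot3 (p j - p i) (u j) = 0) /\
  (forall i, dot3 (cyl_normal (p i)) (u i) = 0).

(* infinitesimal isometries of R^3: x |-> x A + b with A skew-symmetric *)
Definition inf_isometry (A : 'M[R]_3) : Prop := A^T = - A.

Definition tangential_to_cyl (A : 'M[R]_3) (b : 'rV[R]_3) : Prop :=
  forall x : 'rV[R]_3, on_cyl x -> dot3 (cyl_normal x) (x *m A + b) = 0.

Definition rigid_motion_flex (p u : V -> 'rV[R]_3) : Prop :=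
  exists (A : 'M[R]_3) (b : 'rV[R]_3),
    [/\ inf_isometry A, tangential_to_cyl A b & forall i, u i = p i *m A + b].

Definition inf_rigid (e : rel V) (p : V -> 'rV[R]_3) : Prop :=
  forall u, inf_flex e p u -> rigid_motion_flex p u.

(* polynomial variables: coordinate c of vertex x is variable (x, c) *)
Definition var_idx (x : V) (c : 'I_3) : 'I_(#|V| * 3) :=
  mxvec_index (enum_rank x) c.

Definition coords (p : V -> 'rV[R]_3) : 'I_(#|V| * 3) -> R :=
  fun k => mxvec (\matrix_(i < #|V|, c < 3) p (enum_val i) 0 c) 0 k.

Definition in_cyl_ideal (f : {mpoly rat[#|V| * 3]}) : Prop :=
  exists q : V -> {mpoly rat[#|V| * 3]},
    f = \sum_(x : V) q x * ('X_(var_idx x 0) ^+ 2 + 'X_(var_idx x 1) ^+ 2 - 1).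

Definition generic (p : V -> 'rV[R]_3) : Prop :=
  forall f : {mpoly rat[#|V| * 3]},
    (map_mpoly (ratr : rat -> R) f).@[coords p] = 0 -> in_cyl_ideal f.

Definition framework_on_cyl (p : V -> 'rV[R]_3) : Prop := forall i, on_cyl (p i).

Definition gen_inf_rigid (e : rel V) : Prop :=
  forall p : V -> 'rV[R]_3, framework_on_cyl p -> generic p -> inf_rigid e p.

End Rigidity.

Definition simple_graph (V : finType) (e : rel V) : Prop :=
  (forall x y, e x y = e y x) /\ (forall x, e x x = false).

(* vertex-to-K4 move: v is replaced by four new vertices 'I_4 forming a K4;
   each edge x v (x <> v) becomes x (w x), w arbitrary. *)
Definition k4_vertex (V : finType) (v : V) := ({x : V | x != v} + 'I_4)%type.

Definition k4_move (V : finType) (e : rel V) (v : V)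
    (w : {x : V | x != v} -> 'I_4) : rel (k4_vertex v) :=
  fun a b =>
    match a, b with
    | inl x, inl y => e (val x) (val y)
    | inr i, inr j => i != j
    | inl x, inr i => e (val x) v && (w x == i)
    | inr i, inl x => e v (val x) && (w x == i)
    end.

(* Subtracting a rotation about the axis and an axial translation, a flex of
   G' may be assumed to vanish at one vertex of the new K4.  Infinitesimal
   rigidity of a framework with some vertices pinned is the full column rank
   of a matrix of polynomials in the coordinates, so by genericity it passes
   from any special position on the cylinder to a generic one.  Two special
   positions finish the proof: placing the K4 at four explicit points shows
   that the flex vanishes on the K4, and collapsing the K4 to a single point
   turns the flex into a flex of G fixing v, which vanishes because G is
   rigid. *)

From HB Require Import structures.
From mathcomp Require Import all_boot all_order all_algebra.
From mathcomp Require Import reals.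
From mathcomp Require Import mpoly.
From mathcomp Require Import ring lra.

Set Implicit Arguments.
Unset Strict Implicit.
Unset Printing Implicit Defensive.
Import Order.TTheory GRing.Theory Num.Theory.
Local Open Scope ring_scope.

Lemma row_full_kerP (F : fieldType) m n (A : 'M[F]_(m, n)) :
  row_full A <-> (forall x : 'cV_n, A *m x = 0 -> x = 0).
Proof.
have -> : row_full A = row_free A^T by rewrite /row_full /row_free mxrank_tr.
split=> [freeAT x Ax0 | kerA].
  apply: trmx_inj; apply/eqP; rewrite trmx0 -(mulmx_free_eq0 _ freeAT).
  by rewrite -trmx_mul Ax0 trmx0.
apply: inj_row_free => y yAT0; apply: trmx_inj; rewrite trmx0.
by apply: kerA; rewrite -[A]trmxK -trmx_mul yAT0 trmx0.
Qed.

Section Specialization.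
Variables (R : realType) (n : nat).

Definition rat_eval (z : 'I_n -> R) : {rmorphism {mpoly rat[n]} -> R} :=
  meval z \o map_mpoly (ratr : rat -> R).

(* A nonzero maximal minor at [z] is a polynomial outside [I], hence nonzero
   at [q]. *)
Lemma row_full_specialize (I : {mpoly rat[n]} -> Prop) (z q : 'I_n -> R) m k
    (A : 'M[{mpoly rat[n]}]_(m, k)) :
  (forall f, I f -> rat_eval z f = 0) -> (forall f, rat_eval q f = 0 -> I f) ->
  row_full (map_mx (rat_eval z) A) -> row_full (map_mx (rat_eval q) A).
Proof.
move=> Iz0 q0I fullz; set g := fullrankfun fullz.
have rowsub_map s :
    rowsub g (map_mx (rat_eval s) A) = map_mx (rat_eval s) (rowsub g A).
  by apply/matrixP => i j; rewrite !mxE.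
have det_z : rat_eval z (\det (rowsub g A)) != 0.
  by rewrite -det_map_mx -rowsub_map -unitfE -unitmxE fullrowsub_unit.
have unit_q : rowsub g (map_mx (rat_eval q) A) \in unitmx.
  rewrite unitmxE unitfE rowsub_map det_map_mx.
  by apply: contra det_z => /eqP /q0I /Iz0 ->.
apply/row_full_kerP => x Ax0.
have : rowsub g (map_mx (rat_eval q) A) *m x = 0.
  by rewrite mul_rowsub_mx Ax0; apply/matrixP => i j; rewrite !mxE.
by move/(congr1 (mulmx (invmx (rowsub g (map_mx (rat_eval q) A)))));
  rewrite mulKmx // mulmx0.
Qed.
End Specialization.

Section Vectors.
Variable R : realType.

Definition row3 (a b c : R) : 'rV[R]_3 := \row_(i < 3) [:: a; b; c]`_i.

Lemma sum3 (F : 'I_3 -> R) : \sum_i F i = F 0 + F 1 + F 2.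
Proof.
by rewrite !big_ord_recr big_ord0 /= add0r; congr (F _ + F _ + F _); apply: val_inj.
Qed.

Lemma ord3P (c : 'I_3) : [\/ c = 0, c = 1 | c = 2].
Proof.
by case: c => [[|[|[|//]]] ?]; [constructor 1|constructor 2|constructor 3];
  apply: val_inj.
Qed.

Lemma row3_eq (x : 'rV[R]_3) : x = row3 (x 0 0) (x 0 1) (x 0 2).
Proof. by apply/matrixP => i c; rewrite ord1 mxE; case: (ord3P c) => ->. Qed.

Lemma dot3E (a b : 'rV[R]_3) :
  dot3 a b = a 0 0 * b 0 0 + a 0 1 * b 0 1 + a 0 2 * b 0 2.
Proof. exact: sum3. Qed.

Lemma dot3C (a b : 'rV[R]_3) : dot3 a b = dot3 b a.
Proof. by apply: eq_bigr => c _; rewrite mulrC. Qed.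

Lemma dot3Br (a b c : 'rV[R]_3) : dot3 a (b - c) = dot3 a b - dot3 a c.
Proof. by rewrite /dot3 -sumrB; apply: eq_bigr => i _; rewrite !mxE mulrBr. Qed.

Lemma dot3Nl (a b : 'rV[R]_3) : dot3 (- a) b = - dot3 a b.
Proof. by rewrite /dot3 -sumrN; apply: eq_bigr => i _; rewrite !mxE mulNr. Qed.

Lemma dot3_0r (a : 'rV[R]_3) : dot3 a 0 = 0.
Proof. by apply: big1 => i _; rewrite mxE mulr0. Qed.

Lemma dot3_mulmx (a b : 'rV[R]_3) : dot3 a b = (a *m b^T) 0 0.
Proof. by rewrite mxE; apply: eq_bigr => c _; rewrite mxE. Qed.

Lemma cyl_normalE (a : 'rV[R]_3) : cyl_normal a = row3 (2 * a 0 0) (2 * a 0 1) 0.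
Proof. by apply/matrixP => i c; rewrite !mxE; case: (ord3P c) => ->. Qed.

End Vectors.

Section CylinderMotions.
Variable R : realType.
Implicit Types (a : R) (A : 'M[R]_3) (P x : 'rV[R]_3).

Definition cyl_rot a : 'M[R]_3 := a *: (delta_mx 0 1 - delta_mx 1 0).

Lemma cyl_rot_isometry a : inf_isometry (cyl_rot a).
Proof. by rewrite /inf_isometry linearZ linearB /= !trmx_delta -scalerN opprB. Qed.

Lemma cyl_motionE a (b : R) x :
  x *m cyl_rot a + row3 0 0 b = row3 (- a * x 0 1) (a * x 0 0) b.
Proof.
apply/matrixP => i j; rewrite ord1 !mxE sum3 !mxE.
by case: (ord3P j) => -> /=; ring.
Qed.

Lemma cyl_rot_tangential a (b : R) : tangential_to_cyl (cyl_rot a) (row3 0 0 b).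
Proof. by move=> x _; rewrite cyl_motionE cyl_normalE dot3E !mxE /=; ring. Qed.

(* Tangency at the four points (1,0,z) and (0,1,z), z = 0, 1, forces a
   skew-symmetric A to be a rotation about the axis and b to be axial. *)
Lemma tangential_isometryE A (b : 'rV[R]_3) :
  inf_isometry A -> tangential_to_cyl A b ->
  A = cyl_rot (A 0 1) /\ b = row3 0 0 (b 0 2).
Proof.
move=> skewA tanA.
have sk i j : A j i = - A i j by move/matrixP: skewA => /(_ i j); rewrite !mxE.
have oncyl (x y z : R) : x ^+ 2 + y ^+ 2 = 1 -> on_cyl (row3 x y z).
  by rewrite /on_cyl !mxE.
have t1 := tanA _ (oncyl 1 0 0 ltac:(ring)).
have t2 := tanA _ (oncyl 1 0 1 ltac:(ring)).
have t3 := tanA _ (oncyl 0 1 0 ltac:(ring)).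
have t4 := tanA _ (oncyl 0 1 1 ltac:(ring)).
move: t1 t2 t3 t4; rewrite cyl_normalE !dot3E !mxE /= !sum3 !mxE /= => t1 t2 t3 t4.
have s00 := sk 0 0; have s11 := sk 1 1; have s22 := sk 2 2.
have s01 := sk 0 1; have s02 := sk 0 2; have s12 := sk 1 2.
have [a00 a11 a20 a21] : [/\ A 0 0 = 0, A 1 1 = 0, A 2 0 = 0 & A 2 1 = 0] by split; lra.
have [b0 b1] : b 0 0 = 0 /\ b 0 1 = 0 by split; lra.
split; apply/matrixP => i j; rewrite ?ord1 !mxE.
  case: (ord3P i) => ->; case: (ord3P j) => -> /=; lra.
by case: (ord3P j) => -> /=.
Qed.

Lemma cyl_tangent_motion P (t : 'rV[R]_3) :
  on_cyl P -> dot3 (cyl_normal P) t = 0 ->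
  exists a (b : R), t = P *m cyl_rot a + row3 0 0 b.
Proof.
rewrite /on_cyl cyl_normalE dot3E !mxE /= => onP tP.
exists (P 0 0 * t 0 1 - P 0 1 * t 0 0), (t 0 2).
have h : P 0 0 * t 0 0 + P 0 1 * t 0 1 = 0 by lra.
rewrite cyl_motionE [LHS]row3_eq; congr row3; rewrite -[LHS]mulr1 -onP.
  transitivity (- (P 0 0 * t 0 1 - P 0 1 * t 0 0) * P 0 1
                + P 0 0 * (P 0 0 * t 0 0 + P 0 1 * t 0 1)); first by ring.
  by rewrite h mulr0 addr0.
transitivity ((P 0 0 * t 0 1 - P 0 1 * t 0 0) * P 0 0
              + P 0 1 * (P 0 0 * t 0 0 + P 0 1 * t 0 1)); first by ring.
by rewrite h mulr0 addr0.
Qed.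

Lemma cyl_motion_eq0 P a (b : R) :
  on_cyl P -> P *m cyl_rot a + row3 0 0 b = 0 -> a = 0 /\ b = 0.
Proof.
rewrite /on_cyl cyl_motionE => onP /matrixP m0.
have := m0 0 0; have := m0 0 1; have := m0 0 2; rewrite !mxE /= => -> ax ay.
split=> //; rewrite -[a]mulr1 -onP.
transitivity (P 0 0 * (a * P 0 0) - P 0 1 * (- a * P 0 1)); first by ring.
by rewrite ay ax !mulr0 subrr.
Qed.

Lemma rigid_motion_flex_eq0 (T : finType) (p u : T -> 'rV[R]_3) i :
  on_cyl (p i) -> rigid_motion_flex p u -> u i = 0 -> forall j, u j = 0.
Proof.
move=> onp [A [b [skewA tanA uE]]] ui0 j.
have [AE bE] := tangential_isometryE skewA tanA.
move: ui0; rewrite uE AE bE => /(cyl_motion_eq0 onp) [a0 b0].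
rewrite uE AE bE a0 b0 /cyl_rot scale0r mulmx0 add0r.
by apply/matrixP => ? c; rewrite !mxE; case: (ord3P c) => ->.
Qed.

Lemma dot3_skew A (d : 'rV[R]_3) : inf_isometry A -> dot3 d (d *m A) = 0.
Proof.
move=> skewA; suff h : dot3 d (d *m A) = - dot3 d (d *m A) by lra.
rewrite {1}dot3C !dot3_mulmx trmx_mul skewA mulNmx mulmxN.
by rewrite [in RHS]mxE opprK mulmxA.
Qed.

Lemma rigid_motion_inf_flex (T : finType) (e : rel T) (p : T -> 'rV[R]_3) A b :
  framework_on_cyl p -> inf_isometry A -> tangential_to_cyl A b ->
  inf_flex e p (fun i => p i *m A + b).
Proof.
move=> onp skewA tanA; split=> [i j _|i]; last exact: tanA.
rewrite -[p j - p i]opprB dot3Nl -dot3Br opprD addrACA subrr addr0 -mulmxBl.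
exact: dot3_skew.
Qed.
End CylinderMotions.

Section Flexes.
Variables (R : realType) (T : finType) (e : rel T).

Lemma inf_flexB (p u u' : T -> 'rV[R]_3) :
  inf_flex e p u -> inf_flex e p u' -> inf_flex e p (fun i => u i - u' i).
Proof.
move=> [ue un] [u'e u'n]; split=> [i j eij|i].
  by rewrite !dot3Br addrACA -opprD ue // u'e // subrr.
by rewrite dot3Br un u'n subrr.
Qed.

Lemma inf_flex_comp (S : finType) (F : rel S) (g : S -> T) (p u : T -> 'rV[R]_3) :
  (forall a b, F a b -> e (g a) (g b)) ->
  inf_flex e p u -> inf_flex F (p \o g) (u \o g).
Proof. by move=> Fe [ue un]; split=> [a b /Fe /ue|a] /=. Qed.

Lemma inf_flex_lift (S : finType) (F : rel S) (g : S -> T)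
    (p U : T -> 'rV[R]_3) (u : S -> 'rV[R]_3) :
  (forall y1 y2, e y1 y2 -> exists a b, [/\ F a b, g a = y1 & g b = y2]) ->
  (forall y, exists a, g a = y) -> (forall a, u a = U (g a)) ->
  inf_flex F (p \o g) u -> inf_flex e p U.
Proof.
move=> lift gsurj uE [ue un]; split=> [y1 y2 /lift [a [b [Fab <- <-]]]|y].
  by have := ue a b Fab; rewrite !uE.
by have [a <-] := gsurj y; have := un a; rewrite uE.
Qed.
End Flexes.

Section PinnedRigidity.
Variables (R : realType) (W : finType) (F : rel W) (Z : pred W).
Implicit Types (p x : W -> 'rV[R]_3).

Definition pinned_rigid (p : W -> 'rV[R]_3) : Prop :=
  forall u, inf_flex F p u -> (forall a, Z a -> u a = 0) -> forall a, u a = 0.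

(* Equations: an edge equation for each ordered pair, a normal equation for
   each vertex, and one equation per coordinate of a pinned vertex; the rows
   of pairs that are not edges, and of coordinates that are not pinned, are
   zero. *)
Definition rig_eqn := ((W * W) + W + (W * 'I_3))%type.

Definition rig_coef (S : pzRingType) (P : W -> 'I_3 -> S) (r : rig_eqn)
    (bc : W * 'I_3) : S :=
  let: (b, c) := bc in
  match r with
  | inl (inl (i, j)) =>
      if F i j then (b == i)%:R * (P i c - P j c) + (b == j)%:R * (P j c - P i c)
      else 0
  | inl (inr i) => (b == i)%:R * ((c < 2)%N%:R * (2 * P i c))
  | inr (i, c') => if Z i then (b == i)%:R * (c == c')%:R else 0
  end.

Definition rig_mx (S : pzRingType) (P : W -> 'I_3 -> S) :
    'M[S]_(#|{: rig_eqn}|, #|{: W * 'I_3}|) :=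
  \matrix_(r, k) rig_coef P (enum_val r) (enum_val k).

Lemma map_rig_mx (S T : pzRingType) (f : {rmorphism S -> T}) P P' :
  (forall a c, f (P a c) = P' a c) -> map_mx f (rig_mx P) = rig_mx P'.
Proof.
move=> fP; apply/matrixP => r k; rewrite !mxE.
case: (enum_val r) (enum_val k) => [[[i j]|i]|[i c']] [b c] /=.
- by case: (F i j); rewrite ?rmorph0 // rmorphD !rmorphM !rmorphB !rmorph_nat !fP.
- by rewrite !rmorphM !rmorph_nat fP.
- by case: (Z i); rewrite ?rmorph0 // rmorphM !rmorph_nat.
Qed.

Definition rig_value (p x : W -> 'rV[R]_3) (r : rig_eqn) : R :=
  match r with
  | inl (inl (i, j)) =>
      if F i j then dot3 (p i - p j) (x i) + dot3 (p j - p i) (x j) else 0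
  | inl (inr i) => dot3 (cyl_normal (p i)) (x i)
  | inr (i, c) => if Z i then x i 0 c else 0
  end.

Lemma rig_valueP p x :
  (forall r, rig_value p x r = 0) <-> inf_flex F p x /\ (forall a, Z a -> x a = 0).
Proof.
split=> [x0 | [[xe xn] xpin] [[[i j]|i]|[i c]] /=].
- split; first split.
  + by move=> i j Fij; have := x0 (inl (inl (i, j))); rewrite /= Fij.
  + by move=> i; exact: (x0 (inl (inr i))).
  + move=> a Za; apply/matrixP => i c; rewrite ord1 mxE.
    by have := x0 (inr (a, c)); rewrite /= Za.
- by case: ifP => // /xe.
- exact: xn.
- by case: ifP => // /xpin ->; rewrite mxE.
Qed.

Lemma sum_delta (T : finType) (i : T) (h : T -> R) :
  \sum_b (b == i)%:R * h b = h i.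
Proof.
rewrite (bigD1 i) //= eqxx mul1r big1 ?addr0 // => b /negbTE bi.
by rewrite bi mul0r.
Qed.

Lemma sum_vertex_row (i : W) (g : 'I_3 -> R) (x : W -> 'rV[R]_3) :
  \sum_b \sum_c (b == i)%:R * g c * x b 0 c = \sum_c g c * x i 0 c.
Proof.
rewrite -(sum_delta i (fun b => \sum_c g c * x b 0 c)).
by apply: eq_bigr => b _; rewrite mulr_sumr; apply: eq_bigr => c _; rewrite mulrA.
Qed.

Definition flex_col (x : W -> 'rV[R]_3) : 'cV[R]_#|{: W * 'I_3}| :=
  \col_k x (enum_val k).1 0 (enum_val k).2.

Lemma rig_mx_flex_col p x r :
  (rig_mx (fun a c => p a 0 c) *m flex_col x) r 0 = rig_value p x (enum_val r).
Proof.
set P := fun a c => p a 0 c.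
transitivity (\sum_b \sum_c rig_coef P (enum_val r) (b, c) * x b 0 c).
  rewrite pair_bigA mxE /=.
  rewrite (big_enum_val (fun bc => rig_coef P _ (bc.1, bc.2) * x bc.1 0 bc.2)) /=.
  by apply: eq_bigr => k _; rewrite !mxE; case: (enum_val k).
case: (enum_val r) => [[[i j]|i]|[i c']] /=.
- case: (F i j); last by rewrite big1 // => b _; rewrite big1 // => c _; rewrite mul0r.
  under eq_bigr do under eq_bigr do rewrite mulrDl.
  under eq_bigr do rewrite big_split.
  rewrite big_split /= !sum_vertex_row.
  by congr (_ + _); apply: eq_bigr => c _; rewrite !mxE.
- rewrite sum_vertex_row; apply: eq_bigr => c _; rewrite !mxE.
  by case: (ord3P c) => -> /=; rewrite ?mul1r ?mul0r.
- case: (Z i); last by rewrite big1 // => b _; rewrite big1 // => c _; rewrite mul0r.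
  by rewrite sum_vertex_row sum_delta.
Qed.

Lemma pinned_rigid_row_full p :
  pinned_rigid p <-> row_full (rig_mx (fun a c => p a 0 c)).
Proof.
split=> [rigid | full u uflex upin a].
  apply/row_full_kerP => y Ay0.
  pose x a := \row_c y (enum_rank (a, c)) 0.
  have yE : y = flex_col x.
    by apply/matrixP => k i; rewrite ord1 !mxE -surjective_pairing enum_valK.
  have [xflex xpin] : inf_flex F p x /\ (forall a, Z a -> x a = 0).
    by apply/rig_valueP => r; rewrite -(enum_rankK r) -rig_mx_flex_col -yE Ay0 mxE.
  by rewrite yE; apply/matrixP => k i; rewrite mxE (rigid x xflex xpin) !mxE.
have u0 : flex_col u = 0.
  move/row_full_kerP: full; apply; apply/matrixP => r i.
  rewrite ord1 rig_mx_flex_col mxE.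
  exact: (rig_valueP p u).2 (conj uflex upin) _.
apply/matrixP => i c; rewrite ord1 mxE.
by have /matrixP/(_ (enum_rank (a, c)) 0) := u0; rewrite !mxE enum_rankK.
Qed.

Lemma rat_eval_var (p : W -> 'rV[R]_3) a c :
  rat_eval (coords p) 'X_(var_idx a c) = p a 0 c.
Proof. by rewrite /= map_mpolyX mevalXU /coords /var_idx mxvecE mxE enum_rankK. Qed.

Lemma rat_eval_cyl_ideal (p : W -> 'rV[R]_3) f :
  framework_on_cyl p -> in_cyl_ideal f -> rat_eval (coords p) f = 0.
Proof.
move=> onp [h ->]; rewrite rmorph_sum big1 // => a _.
by rewrite rmorphM rmorphB rmorphD !rmorphXn rmorph1 !rat_eval_var onp subrr mulr0.
Qed.

Lemma pinned_rigid_generic (z q : W -> 'rV[R]_3) :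
  framework_on_cyl z -> generic q -> pinned_rigid z -> pinned_rigid q.
Proof.
move=> onz qgen; rewrite !pinned_rigid_row_full.
rewrite -!(map_rig_mx (f := rat_eval _) (rat_eval_var _)).
apply: (row_full_specialize (I := @in_cyl_ideal W)) => f.
  exact: rat_eval_cyl_ideal.
exact: qgen.
Qed.

End PinnedRigidity.

Lemma comp_mpolyA (R : comNzRingType) n k l (p : {mpoly R[n]})
    (lq : n.-tuple {mpoly R[k]}) (lr : k.-tuple {mpoly R[l]}) :
  (p \mPo lq) \mPo lr = p \mPo [tuple tnth lq i \mPo lr | i < n].
Proof.
have monomial c m : ((c *: 'X_[m]) \mPo lq) \mPo lr =
    (c *: 'X_[m]) \mPo [tuple tnth lq i \mPo lr | i < n].
  rewrite !comp_mpolyZ !comp_mpolyX rmorph_prod; congr (_ *: _).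
  by apply: eq_bigr => i _; rewrite rmorphXn tnth_mktuple.
rewrite [p]mpolyE (raddf_sum (comp_mpoly lq)) (raddf_sum (comp_mpoly lr)).
by rewrite (raddf_sum (comp_mpoly _)); apply: eq_bigr => m _; exact: monomial.
Qed.

Section GenericRestriction.
Variables (R : realType) (U V : finType) (g : U -> V).
Hypothesis g_inj : injective g.

Definition subst_vars (T : finType) m (h : T -> 'I_3 -> {mpoly rat[m]}) :
    (#|T| * 3).-tuple {mpoly rat[m]} :=
  [tuple mxvec (\matrix_(i, c) h (enum_val i) c) 0 k | k < #|T| * 3].

Lemma comp_subst_vars (T : finType) m (h : T -> 'I_3 -> {mpoly rat[m]}) a c :
  'X_(var_idx a c) \mPo subst_vars h = h a c.
Proof. by rewrite comp_mpolyXU -tnth_nth tnth_mktuple mxvecE mxE enum_rankK. Qed.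

Definition push_vars :=
  subst_vars (fun y c => 'X_(var_idx (g y) c) : {mpoly rat[#|V| * 3]}).

(* Coordinates of vertices outside the image of [g] are sent to the point
   (1, 0, 0) of the cylinder, which kills their ideal generators. *)
Definition pull_vars :=
  subst_vars (fun a c => if [pick y | g y == a] is Some y
                         then 'X_(var_idx y c) : {mpoly rat[#|U| * 3]}
                         else (c == 0)%:R).

Lemma comp_pull_vars y c :
  'X_(var_idx (g y) c) \mPo pull_vars = 'X_(var_idx y c).
Proof.
rewrite comp_subst_vars; case: pickP => [y' /eqP /g_inj -> //|].
by move/(_ y); rewrite eqxx.
Qed.

Lemma pull_push_vars f : (f \mPo push_vars) \mPo pull_vars = f.
Proof.
rewrite comp_mpolyA -[RHS]comp_mpoly_id; congr comp_mpoly.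
apply: eq_from_tnth => k; rewrite !tnth_mktuple; case/mxvec_indexP: k => i c.
by rewrite mxvecE mxE comp_pull_vars /var_idx enum_valK.
Qed.

Lemma rat_eval_push_vars (q : V -> 'rV[R]_3) f :
  rat_eval (coords q) (f \mPo push_vars) = rat_eval (coords (q \o g)) f.
Proof.
rewrite /= map_mpoly_comp; last exact: fmorph_inj.
rewrite comp_mpoly_meval; apply: meval_eq => k; rewrite tnth_map tnth_mktuple.
case/mxvec_indexP: k => i c; rewrite mxvecE mxE.
by rewrite -[LHS]/(rat_eval _ _) rat_eval_var /coords mxvecE mxE.
Qed.

Lemma in_cyl_ideal_pull f : in_cyl_ideal f -> in_cyl_ideal (f \mPo pull_vars).
Proof.
move=> [h ->]; exists (fun y => h (g y) \mPo pull_vars).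
rewrite raddf_sum (bigID (mem (codom g))) /= [X in _ + X]big1 ?addr0 => [|a aNg].
  rewrite -big_uniq /=; last by rewrite codomE map_inj_uniq // enum_uniq.
  rewrite codomE big_map big_enum /=; apply: eq_bigr => y _.
  by rewrite rmorphM rmorphB rmorphD !rmorphXn rmorph1 /= !comp_pull_vars.
rewrite rmorphM rmorphB rmorphD !rmorphXn rmorph1 /= /pull_vars !comp_subst_vars.
case: pickP => [y /eqP gy|_]; first by rewrite -gy codom_f in aNg.
by rewrite /= expr1n expr0n addr0 subrr mulr0.
Qed.

Lemma generic_comp (q : V -> 'rV[R]_3) : generic q -> generic (q \o g).
Proof.
move=> qgen f f0; rewrite -(pull_push_vars f); apply: in_cyl_ideal_pull.
by apply: qgen; rewrite -[LHS]/(rat_eval _ _) rat_eval_push_vars.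
Qed.

End GenericRestriction.

Section K4Frame.
Variable R : realType.

Lemma ord4P (i : 'I_4) : [\/ i = 0, i = 1, i = 2 | i = 3].
Proof.
by case: i => [[|[|[|[|//]]]] ?];
  [constructor 1|constructor 2|constructor 3|constructor 4]; apply: val_inj.
Qed.

Definition k4_pts (i : 'I_4) : 'rV[R]_3 :=
  [:: row3 1 0 0; row3 0 1 0; row3 (-1) 0 1; row3 0 (-1) 3]`_i.

Lemma k4_pts_on_cyl : framework_on_cyl k4_pts.
Proof. by move=> i; rewrite /on_cyl; case: (ord4P i) => ->; rewrite !mxE /=; ring. Qed.

Lemma k4_pts_pinned_rigid :
  pinned_rigid (fun i j : 'I_4 => i != j) (pred1 0) k4_pts.
Proof.
move=> x [xe xn] xpin; have x0 : x 0 = 0 := xpin 0 (eqxx _).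
have := xe 0 1 isT; have := xe 0 2 isT; have := xe 0 3 isT.
have := xe 1 2 isT; have := xe 1 3 isT; have := xe 2 3 isT.
have := xn 1; have := xn 2; have := xn 3.
rewrite x0 !dot3_0r /k4_pts /= cyl_normalE !dot3E !mxE /=.
move=> n3 n2 n1 e23 e13 e12 e03 e02 e01.
move=> i; apply/matrixP => ? c; rewrite ord1 mxE.
case: (ord4P i) => [->|->|->|->]; first by rewrite x0 mxE.
all: by case: (ord3P c) => ->; lra.
Qed.

End K4Frame.

Section VertexToK4.
Variables (R : realType) (V : finType) (e : rel V) (v : V).
Variable w : {x : V | x != v} -> 'I_4.
Local Notation V' := (k4_vertex v).
Local Notation G' := (k4_move e w).

Definition k4_embed (y : V) : V' := if insub y is Some a then inl a else inr 0.

Definition k4_contract (a : V') : V := if a is inl x then val x else v.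

Definition in_k4 (a : V') : bool := if a is inr _ then true else false.

Lemma k4_embedK : cancel k4_embed k4_contract.
Proof. by move=> y; rewrite /k4_embed; case: insubP => [a _ <-|/negbNE/eqP]. Qed.

Lemma k4_embed_val a : k4_embed (val a) = inl a.
Proof. by rewrite /k4_embed valK. Qed.

Lemma k4_embed_v : k4_embed v = inr 0.
Proof. by rewrite /k4_embed insubF ?eqxx. Qed.

Lemma k4_move_lift : irreflexive e ->
  forall y1 y2, e y1 y2 ->
  exists a b, [/\ G' a b, k4_contract a = y1 & k4_contract b = y2].
Proof.
move=> eirr y1 y2.
have [->|y1v] := eqVneq y1 v; have [->|y2v] := eqVneq y2 v => e12.
- by rewrite eirr in e12.
- by exists (inr (w (exist _ y2 y2v))), (inl (exist _ y2 y2v)); rewrite /= e12 eqxx.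
- by exists (inl (exist _ y1 y1v)), (inr (w (exist _ y1 y1v))); rewrite /= e12 eqxx.
- by exists (inl (exist _ y1 y1v)), (inl (exist _ y2 y2v)).
Qed.

Lemma k4_flex_vanish (q u : V' -> 'rV[R]_3) :
  generic q -> inf_flex G' q u -> u (inr 0) = 0 -> forall i, u (inr i) = 0.
Proof.
move=> qgen uflex u0.
have inr_inj : injective (@inr {x : V | x != v} 'I_4) by move=> i j [].
have K4gen : generic (q \o inr) := generic_comp inr_inj qgen.
have K4flex : inf_flex (fun i j : 'I_4 => i != j) (q \o inr) (u \o inr).
  exact: inf_flex_comp uflex.
have := pinned_rigid_generic (k4_pts_on_cyl R) K4gen (@k4_pts_pinned_rigid R) K4flex.
by apply=> i /eqP ->.
Qed.

Lemma k4_contract_pinned_rigid (q : V' -> 'rV[R]_3) :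
  irreflexive e -> gen_inf_rigid R e -> framework_on_cyl q -> generic q ->
  pinned_rigid G' in_k4 ((q \o k4_embed) \o k4_contract).
Proof.
move=> eirr rigidG onq qgen x xflex xpin.
have xE a : x a = (x \o k4_embed) (k4_contract a).
  by case: a => [a|i] /=; rewrite ?k4_embed_val // k4_embed_v !xpin.
have Uflex : inf_flex e (q \o k4_embed) (x \o k4_embed).
  apply: inf_flex_lift xE xflex; first exact: k4_move_lift.
  by move=> y; exists (k4_embed y); rewrite k4_embedK.
have onp : framework_on_cyl (q \o k4_embed) by move=> y; exact: onq.
have pgen : generic (q \o k4_embed) := generic_comp (can_inj k4_embedK) qgen.
have := rigidG _ onp pgen _ Uflex => /rigid_motion_flex_eq0 U0 a.
by rewrite xE (U0 v) //= k4_embed_v xpin.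
Qed.

Lemma k4_move_flex_vanish (q u : V' -> 'rV[R]_3) :
  irreflexive e -> gen_inf_rigid R e -> framework_on_cyl q -> generic q ->
  inf_flex G' q u -> u (inr 0) = 0 -> forall a, u a = 0.
Proof.
move=> eirr rigidG onq qgen uflex u0.
have onz : framework_on_cyl ((q \o k4_embed) \o k4_contract).
  by move=> a; exact: onq.
have := pinned_rigid_generic onz qgen (k4_contract_pinned_rigid eirr rigidG onq qgen).
by apply=> // -[a //|i _]; exact: k4_flex_vanish qgen uflex u0 i.
Qed.

End VertexToK4.

Theorem corollary5p3 (R : realType) (V : finType) (e : rel V)
  (v : V) (w : {x : V | x != v} -> 'I_4) :
  simple_graph e ->
  gen_inf_rigid R e -> gen_inf_rigid R (k4_move e w).
Proof.
move=> [_ eirr] rigidG q onq qgen u uflex.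
have [a [b ub]] := cyl_tangent_motion (onq (inr 0)) (uflex.2 (inr 0)).
pose m i := q i *m cyl_rot a + row3 0 0 b.
have mflex : inf_flex (k4_move e w) q m.
  exact: rigid_motion_inf_flex onq (cyl_rot_isometry a) (cyl_rot_tangential a b).
have u_m0 := k4_move_flex_vanish eirr rigidG onq qgen (inf_flexB uflex mflex).
exists (cyl_rot a), (row3 0 0 b); split=> [||i]; first exact: cyl_rot_isometry.
  exact: cyl_rot_tangential.
by apply/eqP; rewrite -subr_eq0 u_m0 // ub subrr.
Qed.
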